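(* Let $G$ be a discrete group, $A$ an abelian group, $\alpha\colon G^3\to A$ a normalized 3-cocycle, $\mathcal{G}=\mathcal{G}(G,A,\alpha)$, and $X$ a smooth manifold. Let $u\colon Y\to X$ be a surjective submersion, let $\rho_1,\rho_2$ be $G$-valued Čech 1-cocycles on $Y$, let $h\colon Y\to G$ be locally constant with $\rho_2(y_1,y_2)h(y_2)=h(y_1)\rho_1(y_1,y_2)$ (so that $h$ defines an isomorphism $\varphi_{Y,h}\colon P_{u,\rho_1}\to P_{u,\rho_2}$), and let $(u,\rho_1,\gamma_1)$ be a flat $\mathcal{G}$-bundle. (1) There exist a flat $\mathcal{G}$-bundle $(u,\rho_2,{}^h\gamma_1)$ and a 1-morphism $(Y,\mathrm{id}_Y,\mathrm{id}_Y,h,\eta)\colon(u,\rho_1,\gamma_1)\to(u,\rho_2,{}^h\gamma_1)$, whose underlying $G$-bundle isomorphism is $\varphi_{Y,h}$. (2) For any such ${}^h\gamma_1$, and any flat $\mathcal{G}$-bundle $(u,\rho_2,\gamma_2)$, there exists a 1-morphism $(Y,\mathrm{id}_Y,\mathrm{id}_Y,h,\eta')\colon(u,\rho_1,\gamma_1)\to(u,\rho_2,\gamma_2)$ if and only if $\gamma_2={}^h\gamma_1\cdot d\eta''$ for some locally constant $\eta''\colon Y\times_XY\to A$; in particular then $[{}^h\gamma_1/\gamma_2]=1\in\check{H}^2(X;A)$.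
   Context: $A$ carries the discrete topology; $Y^{[k]}$ denotes the $k$-fold fiber product of $Y$ over $X$. A $G$-valued Čech 1-cocycle is a locally constant $\rho\colon Y^{[2]}\to G$ with $\rho(y_1,y_3)=\rho(y_1,y_2)\rho(y_2,y_3)$; $P_{u,\rho}=(Y\times G)/((y_1,\rho(y_1,y_2)g)\sim(y_2,g))$. The Čech differential is $dc(y_1,..,y_{k+1})=\prod_i c(y_1,..,\widehat{y_i},..,y_{k+1})^{(-1)^{i-1}}$ and $\rho^*\alpha(y_1,..,y_4)=\alpha(\rho(y_1,y_2),\rho(y_2,y_3),\rho(y_3,y_4))$. A flat $\mathcal{G}$-bundle is a triple $(u,\rho,\gamma)$ with $\gamma\colon Y^{[3]}\to A$ locally constant, $d\gamma=\rho^*\alpha$, $\gamma(y_1,y_2,y_2)=\gamma(y_2,y_2,y_3)=1$. A 1-morphism $(u_1,\rho_1,\gamma_1)\to(u_2,\rho_2,\gamma_2)$ is $(Z,v_1,v_2,h,\eta)$ with $v_i\colon Z\to Y_i$, $u_1v_1=u_2v_2$ a surjective submersion, $h\colon Z\to G$, $\eta\colon Z^{[2]}\to A$ locally constant with (pullbacks along $v_i$ implicit) $\rho_2(z_1,z_2)h(z_2)=h(z_1)\rho_1(z_1,z_2)$ and $d\eta(z_1,z_2,z_3)=\frac{\gamma_1}{\gamma_2}(z_1,z_2,z_3)\cdot\frac{\alpha(\rho_2(z_1,z_2),h(z_2),\rho_1(z_2,z_3))}{\alpha(h(z_1),\rho_1(z_1,z_2),\rho_1(z_2,z_3))\alpha(\rho_2(z_1,z_2),\rho_2(z_2,z_3),h(z_3))}$.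 Its underlying $G$-bundle isomorphism is the one determined by $h$. *)

From HB Require Import structures.
From mathcomp Require Import all_boot all_order all_algebra.
From mathcomp Require Import boolp classical_sets topology.
Set Implicit Arguments. Unset Strict Implicit. Unset Printing Implicit Defensive.
Import GRing.Theory.
Local Open Scope classical_set_scope.
Local Open Scope ring_scope.

(* G : a (discrete, possibly infinite) group, MathComp's [groupType];
   A : an abelian group, written ADDITIVELY ([zmodType]): the paper's
   products/quotients in A become sums/differences and 1 becomes 0. *)

Definition lc_on {T : topologicalType} {V : Type} (S : set T) (f : T -> V) : Prop :=
  forall p, S p -> exists N, nbhs p N /\ forall q, N q -> S q -> f q = f p.

Definition fib2 {Y : topologicalType} {X : Type} (u : Y -> X) : set (Y * Y) :=
  [set p | u p.1 = u p.2].
Definition fib3 {Y : topologicalType} {X : Type} (u : Y -> X) : set (Y * Y * Y) :=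
  [set p | u p.1.1 = u p.1.2 /\ u p.1.2 = u p.2].

Definition lc1 {Y : topologicalType} {V : Type} (f : Y -> V) : Prop := lc_on setT f.
Definition lc2 {Y : topologicalType} {X V : Type} (u : Y -> X) (f : Y -> Y -> V) : Prop :=
  lc_on (fib2 u) (fun p => f p.1 p.2).
Definition lc3 {Y : topologicalType} {X V : Type} (u : Y -> X) (f : Y -> Y -> Y -> V) : Prop :=
  lc_on (fib3 u) (fun p => f p.1.1 p.1.2 p.2).

(* Topological surrogate for "surjective submersion": continuous, surjective,
   and admitting continuous local sections through every point of Y. *)
Definition surj_submersion {Y X : topologicalType} (u : Y -> X) : Prop :=
  [/\ continuous u,
      (forall x, exists y, u y = x) &
      (forall y, exists (U : set X) (s : X -> Y),
          [/\ nbhs (u y) U, s (u y) = y, {within U, continuous s} &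
              forall x, U x -> u (s x) = x])].

Definition normalized_3cocycle {G : groupType} {A : zmodType} (alpha : G -> G -> G -> A) : Prop :=
  (forall g1 g2 g3 g4 : G,
     alpha g2 g3 g4 - alpha (g1 * g2)%g g3 g4 + alpha g1 (g2 * g3)%g g4
       - alpha g1 g2 (g3 * g4)%g + alpha g1 g2 g3 = 0) /\
  (forall g h : G, alpha 1%g g h = 0 /\ alpha g 1%g h = 0 /\ alpha g h 1%g = 0).

Definition cech_d2 {Y : Type} {A : zmodType} (c : Y -> Y -> A) (y1 y2 y3 : Y) : A :=
  c y2 y3 - c y1 y3 + c y1 y2.
Definition cech_d3 {Y : Type} {A : zmodType} (c : Y -> Y -> Y -> A) (y1 y2 y3 y4 : Y) : A :=
  c y2 y3 y4 - c y1 y3 y4 + c y1 y2 y4 - c y1 y2 y3.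

Definition cech_1cocycle {G : groupType} {Y : topologicalType} {X : Type}
    (u : Y -> X) (rho : Y -> Y -> G) : Prop :=
  lc2 u rho /\
  forall y1 y2 y3, u y1 = u y2 -> u y2 = u y3 -> rho y1 y3 = (rho y1 y2 * rho y2 y3)%g.

Definition flat_bundle {G : groupType} {A : zmodType} (alpha : G -> G -> G -> A)
    {Y X : topologicalType} (u : Y -> X) (rho : Y -> Y -> G) (gamma : Y -> Y -> Y -> A) : Prop :=
  [/\ surj_submersion u, cech_1cocycle u rho, lc3 u gamma,
      (forall y1 y2 y3 y4, u y1 = u y2 -> u y2 = u y3 -> u y3 = u y4 ->
         cech_d3 gamma y1 y2 y3 y4 = alpha (rho y1 y2) (rho y2 y3) (rho y3 y4)) &
      (forall y1 y2 y3, u y1 = u y2 -> u y2 = u y3 ->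
         gamma y1 y2 y2 = 0 /\ gamma y2 y2 y3 = 0)].

Definition one_morphism {G : groupType} {A : zmodType} (alpha : G -> G -> G -> A)
    {Y1 Y2 Z X : topologicalType}
    (u1 : Y1 -> X) (rho1 : Y1 -> Y1 -> G) (gamma1 : Y1 -> Y1 -> Y1 -> A)
    (u2 : Y2 -> X) (rho2 : Y2 -> Y2 -> G) (gamma2 : Y2 -> Y2 -> Y2 -> A)
    (v1 : Z -> Y1) (v2 : Z -> Y2) (h : Z -> G) (eta : Z -> Z -> A) : Prop :=
  continuous v1 /\ continuous v2 /\
      (forall z, u1 (v1 z) = u2 (v2 z)) /\
      surj_submersion (u1 \o v1) /\
      lc1 h /\ lc2 (u1 \o v1) eta /\
      (forall z1 z2, u1 (v1 z1) = u1 (v1 z2) ->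
         (rho2 (v2 z1) (v2 z2) * h z2)%g = (h z1 * rho1 (v1 z1) (v1 z2))%g) /\
      (forall z1 z2 z3, u1 (v1 z1) = u1 (v1 z2) -> u1 (v1 z2) = u1 (v1 z3) ->
         cech_d2 eta z1 z2 z3 =
           gamma1 (v1 z1) (v1 z2) (v1 z3) - gamma2 (v2 z1) (v2 z2) (v2 z3)
           + alpha (rho2 (v2 z1) (v2 z2)) (h z2) (rho1 (v1 z2) (v1 z3))
           - alpha (h z1) (rho1 (v1 z1) (v1 z2)) (rho1 (v1 z2) (v1 z3))
           - alpha (rho2 (v2 z1) (v2 z2)) (rho2 (v2 z2) (v2 z3)) (h z3)).

(** The twisted cocycle ^h gamma1 is gamma1 + twist, where twist(y1,y2,y3)
    collects the three associators needed to move h across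
    rho1(y1,y2) rho1(y2,y3):
      twist = alpha(rho2,h,rho1) - alpha(h,rho1,rho1) - alpha(rho2,rho2,h).
    Four instances of the cocycle identity for alpha give
    d twist = rho2^* alpha - rho1^* alpha, so gamma1 + twist is a flat
    structure on rho2; normalization of alpha makes twist vanish on degenerate
    simplices. With v1 = v2 = id the 1-morphism equation says exactly
    gamma2 = gamma1 + twist - d eta, so a 1-morphism over h into
    (u, rho2, gamma2) exists iff gamma2 - (gamma1 + twist) is a coboundary:
    for (1) take eta = 0, and (2) follows since coboundaries form a group. *)
From HB Require Import structures.
From mathcomp Require Import all_boot all_order all_algebra.
From mathcomp Require Import boolp classical_sets topology.
From mathcomp Require Import ring.
Set Implicit Arguments.
Unset Strict Implicit.
Unset Printing Implicit Defensive.
Import GRing.Theory.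
Local Open Scope classical_set_scope.
Local Open Scope ring_scope.

(* The trivial extension Z ⋉ A is a commutative ring into which A embeds
   additively and injectively, so [ring] decides Z-linear identities in A. *)
Section TrivialExtension.
Variable A : zmodType.

Definition trivext := (int * A)%type.
HB.instance Definition _ := GRing.Zmodule.on trivext.

Definition trivext_mul (x y : trivext) : trivext :=
  (x.1 * y.1, x.2 *~ y.1 + y.2 *~ x.1).

Fact trivext_mulA : associative trivext_mul.
Proof.
move=> [m a] [n b] [k c]; congr pair; rewrite /= ?mulrA // !mulrzDl -!mulrzA.
by rewrite addrA (mulrC k m) (mulrC n m).
Qed.

Fact trivext_mulC : commutative trivext_mul.
Proof. by move=> [m a] [n b]; congr pair; rewrite /= (mulrC, addrC). Qed.

Fact trivext_mul1 : left_id ((1, 0) : trivext) trivext_mul.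
Proof. by move=> [m a]; congr pair; rewrite /= ?mul1r // mul0rz add0r mulr1z. Qed.

Fact trivext_mulDl : left_distributive trivext_mul +%R.
Proof.
move=> [m a] [n b] [k c]; congr pair; rewrite /= ?mulrDl //.
by rewrite mulrzDl mulrzDr addrACA.
Qed.

HB.instance Definition _ := GRing.Zmodule_isComPzRing.Build trivext
  trivext_mulA trivext_mulC trivext_mul1 trivext_mulDl.

Definition trivext_in (a : A) : trivext := (0, a).

Fact trivext_in_zmod_morphism : zmod_morphism trivext_in.
Proof. by move=> a b; congr pair; rewrite subr0. Qed.

HB.instance Definition _ := GRing.isZmodMorphism.Build A trivext trivext_in
  trivext_in_zmod_morphism.

Lemma trivext_in_inj : injective trivext_in.
Proof. by move=> a b []. Qed.

End TrivialExtension.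

Ltac zmod_ring := apply: trivext_in_inj; ring.

Section LocallyConstant.
Context {T U : topologicalType}.

Lemma lc_on_cst {W : Type} (S : set T) (c : W) : lc_on S (fun=> c).
Proof. by move=> p _; exists setT; split=> //; apply: filterT. Qed.

Lemma lc_on_map2 {V1 V2 W : Type} (F : V1 -> V2 -> W) (S : set T) f g :
  lc_on S f -> lc_on S g -> lc_on S (fun p => F (f p) (g p)).
Proof.
move=> lcf lcg p Sp.
have [[N1 [N1p fN1]] [N2 [N2p gN2]]] := (lcf p Sp, lcg p Sp).
exists (N1 `&` N2); split; first exact: filterI.
by move=> q [N1q N2q] Sq; rewrite fN1 // gN2.
Qed.

Lemma lc_on_map3 {V1 V2 V3 W : Type} (F : V1 -> V2 -> V3 -> W) (S : set T)
    f1 f2 f3 :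
  lc_on S f1 -> lc_on S f2 -> lc_on S f3 ->
  lc_on S (fun p => F (f1 p) (f2 p) (f3 p)).
Proof.
move=> lcf1 lcf2 lcf3.
apply: (lc_on_map2 (fun xy z => F xy.1 xy.2 z) (f := fun p => (f1 p, f2 p))) lcf3.
exact: lc_on_map2.
Qed.

Lemma lc_on_comp {W : Type} (m : T -> U) (f : U -> W) (S : set T) (S' : set U) :
  continuous m -> (forall p, S p -> S' (m p)) -> lc_on S' f ->
  lc_on S (fun p => f (m p)).
Proof.
move=> m_cont mS lcf p Sp; have [N [Nmp fN]] := lcf _ (mS _ Sp).
exists (m @^-1` N); split; first exact: m_cont.
by move=> q Nmq Sq; apply: fN => //; apply: mS.
Qed.

End LocallyConstant.

Section Faces.
Context {Y : topologicalType} {X V : Type} (u : Y -> X).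

Let continuous_11 : continuous (fun p : Y * Y * Y => p.1.1).
Proof. by move=> p; apply: cvg_comp cvg_fst cvg_fst. Qed.

Let continuous_12 : continuous (fun p : Y * Y * Y => p.1.2).
Proof. by move=> p; apply: cvg_comp cvg_fst cvg_snd. Qed.

Let continuous_2 : continuous (fun p : Y * Y * Y => p.2).
Proof. by move=> p; apply: cvg_snd. Qed.

Lemma lc3_face12 (f : Y -> Y -> V) : lc2 u f -> lc3 u (fun y1 y2 _ => f y1 y2).
Proof.
apply: (lc_on_comp (m := fun p : Y * Y * Y => (p.1.1, p.1.2))
                   (f := fun q => f q.1 q.2)).
  by move=> p; apply: cvg_pair; [apply: continuous_11 | apply: continuous_12].
by move=> p [].
Qed.

Lemma lc3_face23 (f : Y -> Y -> V) : lc2 u f -> lc3 u (fun _ y2 y3 => f y2 y3).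
Proof.
apply: (lc_on_comp (m := fun p : Y * Y * Y => (p.1.2, p.2))
                   (f := fun q => f q.1 q.2)).
  by move=> p; apply: cvg_pair; [apply: continuous_12 | apply: continuous_2].
by move=> p [].
Qed.

Lemma lc3_vertex1 (f : Y -> V) : lc1 f -> lc3 u (fun y1 _ _ => f y1).
Proof. exact: lc_on_comp continuous_11 (fun _ _ => I). Qed.

Lemma lc3_vertex2 (f : Y -> V) : lc1 f -> lc3 u (fun _ y2 _ => f y2).
Proof. exact: lc_on_comp continuous_12 (fun _ _ => I). Qed.

Lemma lc3_vertex3 (f : Y -> V) : lc1 f -> lc3 u (fun _ _ y3 => f y3).
Proof. exact: lc_on_comp continuous_2 (fun _ _ => I). Qed.

End Faces.

Lemma cech_1cocycle_diag {G : groupType} {Y : topologicalType} {X : Type}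
    {u : Y -> X} {rho : Y -> Y -> G} :
  cech_1cocycle u rho -> forall y, rho y y = 1%g.
Proof.
move=> [_ rhoM] y; apply: (@mulgI _ (rho y y)).
by rewrite mulg1 -rhoM.
Qed.

Section Twist.
Variables (G : groupType) (A : zmodType) (alpha : G -> G -> G -> A).
Variables (X Y : topologicalType) (u : Y -> X).
Variables (rho1 rho2 : Y -> Y -> G) (h : Y -> G).
Hypothesis alpha_cocycle : normalized_3cocycle alpha.
Hypothesis rho1_cocycle : cech_1cocycle u rho1.
Hypothesis rho2_cocycle : cech_1cocycle u rho2.
Hypothesis u_submersion : surj_submersion u.
Hypothesis h_lc : lc1 h.
Hypothesis h_intertwines :
  forall y1 y2, u y1 = u y2 -> (rho2 y1 y2 * h y2)%g = (h y1 * rho1 y1 y2)%g.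

Definition twist (y1 y2 y3 : Y) : A :=
  alpha (rho2 y1 y2) (h y2) (rho1 y2 y3) - alpha (h y1) (rho1 y1 y2) (rho1 y2 y3)
  - alpha (rho2 y1 y2) (rho2 y2 y3) (h y3).

Definition twisted (gamma : Y -> Y -> Y -> A) (y1 y2 y3 : Y) : A :=
  gamma y1 y2 y3 + twist y1 y2 y3.

Lemma lc3_twist : lc3 u twist.
Proof.
have [[rho1_lc _] [rho2_lc _]] := (rho1_cocycle, rho2_cocycle).
rewrite /lc3 /twist.
apply: (lc_on_map2 (fun a b => a - b));
  first apply: (lc_on_map2 (fun a b => a - b));
  apply: (lc_on_map3 alpha);
  by [apply: lc3_face12 | apply: lc3_face23 | apply: lc3_vertex1
     | apply: lc3_vertex2 | apply: lc3_vertex3].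
Qed.

Lemma twist_degenerate y1 y2 y3 : twist y1 y2 y2 = 0 /\ twist y2 y2 y3 = 0.
Proof.
have [_ alpha_normal] := alpha_cocycle.
have alpha_1l g k : alpha 1%g g k = 0 by case: (alpha_normal g k).
have alpha_1m g k : alpha g 1%g k = 0 by case: (alpha_normal g k) => _ [].
have alpha_1r g k : alpha g k 1%g = 0 by case: (alpha_normal g k) => _ [].
rewrite /twist !(cech_1cocycle_diag rho1_cocycle).
rewrite !(cech_1cocycle_diag rho2_cocycle).
by rewrite !alpha_1l !alpha_1m !alpha_1r !subr0.
Qed.

Lemma cech_d3_twist y1 y2 y3 y4 : u y1 = u y2 -> u y2 = u y3 -> u y3 = u y4 ->
  cech_d3 twist y1 y2 y3 y4 =
    alpha (rho2 y1 y2) (rho2 y2 y3) (rho2 y3 y4)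
    - alpha (rho1 y1 y2) (rho1 y2 y3) (rho1 y3 y4).
Proof.
move=> e12 e23 e34; have [alphaC _] := alpha_cocycle.
have [[_ rho1M] [_ rho2M]] := (rho1_cocycle, rho2_cocycle).
have c1 := alphaC (h y1) (rho1 y1 y2) (rho1 y2 y3) (rho1 y3 y4).
have c2 := alphaC (rho2 y1 y2) (rho2 y2 y3) (rho2 y3 y4) (h y4).
have c3 := alphaC (rho2 y1 y2) (h y2) (rho1 y2 y3) (rho1 y3 y4).
have c4 := alphaC (rho2 y1 y2) (rho2 y2 y3) (h y3) (rho1 y3 y4).
rewrite (h_intertwines e34) in c2.
rewrite (h_intertwines e12) -(h_intertwines e23) in c3.
have cocycle_sum :=
  congr2 +%R (congr2 (fun a b => a - b) (congr2 (fun a b => a - b) c1 c2) c3) c4.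
rewrite !subr0 addr0 in cocycle_sum.
rewrite /cech_d3 /twist (rho1M _ _ _ e12 e23) (rho1M _ _ _ e23 e34).
rewrite (rho2M _ _ _ e12 e23) (rho2M _ _ _ e23 e34).
by apply/subr0_eq/(etrans _ cocycle_sum); zmod_ring.
Qed.

Lemma twisted_flat_bundle gamma :
  flat_bundle alpha u rho1 gamma -> flat_bundle alpha u rho2 (twisted gamma).
Proof.
move=> [_ _ gamma_lc gamma_d3 gamma_degenerate]; split=> //.
- exact: (lc_on_map2 +%R gamma_lc lc3_twist).
- move=> y1 y2 y3 y4 e12 e23 e34.
  have -> : cech_d3 (twisted gamma) y1 y2 y3 y4
      = cech_d3 gamma y1 y2 y3 y4 + cech_d3 twist y1 y2 y3 y4.
    by rewrite /cech_d3 /twisted; zmod_ring.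
  by rewrite gamma_d3 // cech_d3_twist // addrC subrK.
- move=> y1 y2 y3 e12 e23; have [g1 g2] := gamma_degenerate _ _ _ e12 e23.
  by have [t1 t2] := twist_degenerate y1 y2 y3; rewrite /twisted g1 g2 t1 t2 addr0.
Qed.

Lemma one_morphism_idP gamma1 gamma2 eta :
  one_morphism alpha u rho1 gamma1 u rho2 gamma2 id id h eta <->
  lc2 u eta /\ forall y1 y2 y3, u y1 = u y2 -> u y2 = u y3 ->
    gamma2 y1 y2 y3 = twisted gamma1 y1 y2 y3 - cech_d2 eta y1 y2 y3.
Proof.
split.
  move=> [_ [_ [_ [_ [_ [eta_lc [_ eta_d2]]]]]]]; split=> // y1 y2 y3 e12 e23.
  by rewrite (eta_d2 _ _ _ e12 e23) /id /twisted /twist; zmod_ring.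
move=> [eta_lc gamma2E].
have id_continuous : continuous (@id Y) by move=> y; apply: cvg_id.
do 7 split=> //.
by move=> y1 y2 y3 e12 e23; rewrite /id gamma2E // /twisted /twist; zmod_ring.
Qed.

End Twist.

Theorem mainTheorem8 (G : groupType) (A : zmodType) (alpha : G -> G -> G -> A)
    (X Y : topologicalType) (u : Y -> X) (rho1 rho2 : Y -> Y -> G) (h : Y -> G)
    (gamma1 : Y -> Y -> Y -> A) :
  normalized_3cocycle alpha ->
  surj_submersion u ->
  cech_1cocycle u rho1 -> cech_1cocycle u rho2 ->
  lc1 h ->
  (forall y1 y2, u y1 = u y2 -> (rho2 y1 y2 * h y2)%g = (h y1 * rho1 y1 y2)%g) ->
  flat_bundle alpha u rho1 gamma1 ->
  (exists (hgamma1 : Y -> Y -> Y -> A) (eta : Y -> Y -> A),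
      flat_bundle alpha u rho2 hgamma1 /\
      one_morphism alpha u rho1 gamma1 u rho2 hgamma1 id id h eta) /\
  (forall (hgamma1 : Y -> Y -> Y -> A) (eta : Y -> Y -> A),
      flat_bundle alpha u rho2 hgamma1 ->
      one_morphism alpha u rho1 gamma1 u rho2 hgamma1 id id h eta ->
      forall gamma2 : Y -> Y -> Y -> A,
        flat_bundle alpha u rho2 gamma2 ->
        ((exists eta' : Y -> Y -> A,
            one_morphism alpha u rho1 gamma1 u rho2 gamma2 id id h eta') <->
         (exists eta'' : Y -> Y -> A,
            lc2 u eta'' /\
            forall y1 y2 y3, u y1 = u y2 -> u y2 = u y3 ->
              gamma2 y1 y2 y3 = hgamma1 y1 y2 y3 + cech_d2 eta'' y1 y2 y3))).
Proof.
move=> alpha_cocycle u_submersion rho1_cocycle rho2_cocycle h_lc h_intertwines.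
move=> gamma1_flat.
have morphP := one_morphism_idP alpha u_submersion h_lc h_intertwines.
split.
  exists (twisted alpha rho1 rho2 h gamma1), (fun _ _ => 0); split.
    exact: twisted_flat_bundle.
  apply/morphP; split; first exact: lc_on_cst.
  by move=> y1 y2 y3 _ _; rewrite /cech_d2 subrr add0r subr0.
move=> hgamma1 eta _ /morphP[eta_lc hgamma1E] gamma2 _; split.
  move=> [eta' /morphP[eta'_lc gamma2E]].
  exists (fun y1 y2 => eta y1 y2 - eta' y1 y2).
  split; first exact: (lc_on_map2 (fun a b => a - b) eta_lc eta'_lc).
  by move=> y1 y2 y3 e12 e23; rewrite gamma2E // hgamma1E // /cech_d2; zmod_ring.
move=> [eta'' [eta''_lc gamma2E]].
exists (fun y1 y2 => eta y1 y2 - eta'' y1 y2); apply/morphP.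
split; first exact: (lc_on_map2 (fun a b => a - b) eta_lc eta''_lc).
by move=> y1 y2 y3 e12 e23; rewrite gamma2E // hgamma1E // /cech_d2; zmod_ring.
Qed.
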